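(* Let $k_1,k_2$ be nonnegative integers with $2k_1+k_2\ge 2$. Then for every integer $t$ with $1\le t\le k_1$ there exists a projective linear code $C$ over $\mathbb{Z}_4$ of type $4^{k_1}2^{k_2}$, length $n=2^{2k_1+k_2-1}-2^{2k_1+k_2-t-1}$ and minimum Lee distance $d_L=n$, having exactly two nonzero Lee weights $w_1=2^{2k_1+k_2-1}-2^{2k_1+k_2-t-1}$ and $w_2=2^{2k_1+k_2-1}$, with $A_{w_1}=2^{2k_1+k_2}-2^t$ and $A_{w_2}=2^t-1$.
   Context: A linear code of length $n$ over $\mathbb{Z}_4$ is a $\mathbb{Z}_4$-submodule of $\mathbb{Z}_4^n$; it has type $4^{k_1}2^{k_2}$ if it is isomorphic as a group to $\mathbb{Z}_4^{k_1}\times\mathbb{Z}_2^{k_2}$. The Lee weight on $\mathbb{Z}_4$ is $w_L(0)=0,w_L(1)=1,w_L(2)=2,w_L(3)=1$, extended additively to vectors; $d_L$ is the minimum Lee weight of a nonzero codeword. The dual $C^\perp$ is taken with respect to $\mathbf{x}\cdot\mathbf{y}=\sum x_iy_i\in\mathbb{Z}_4$, and $C$ is projective if $d_L(C^\perp)\ge3$. $A_w$ is the number of codewords of Lee weight $w$. *)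

From HB Require Import structures.
From mathcomp Require Import all_boot all_order all_algebra.
Set Implicit Arguments. Unset Strict Implicit. Unset Printing Implicit Defensive.
Import GRing.Theory.
Local Open Scope ring_scope.

Definition leeZ4 (x : 'Z_4) : nat :=
  match val x with 0 => 0 | 1 => 1 | 2 => 2 | _ => 1 end%N.

Definition lee_wt n (v : 'rV['Z_4]_n) : nat := (\sum_(i < n) leeZ4 (v ord0 i))%N.

Definition z4_linear n (C : {set 'rV['Z_4]_n}) : Prop :=
  0 \in C /\ (forall x y, x \in C -> y \in C -> x + y \in C) /\
  (forall (a : 'Z_4) x, x \in C -> a *: x \in C).

Definition z4_type n (C : {set 'rV['Z_4]_n}) (k1 k2 : nat) : Prop :=
  exists f : 'rV['Z_4]_k1 * 'rV['Z_2]_k2 -> 'rV['Z_4]_n,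
    [/\ injective f, (forall u v, f (u + v) = f u + f v)
      & forall c, c \in C <-> exists u, c = f u].

Definition z4_dual n (C : {set 'rV['Z_4]_n}) : {set 'rV['Z_4]_n} :=
  [set y : 'rV['Z_4]_n | [forall x in C, \sum_(i < n) x ord0 i * y ord0 i == 0]].

Definition z4_projective n (C : {set 'rV['Z_4]_n}) : Prop :=
  forall y, y \in z4_dual C -> y != 0 -> (3 <= lee_wt y)%N.

Definition min_lee_dist n (C : {set 'rV['Z_4]_n}) (d : nat) : Prop :=
  (exists2 c, c \in C & c != 0 /\ lee_wt c = d) /\
  (forall c, c \in C -> c != 0 -> (d <= lee_wt c)%N).

Definition lee_A n (C : {set 'rV['Z_4]_n}) (w : nat) : nat :=
  #|[set c in C | lee_wt c == w]|.

(* Let V = Z_4^k1 x Z_2^k2 carry the symmetric non-degenerate Z_4-valued pairing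
   <u, v> = sum_i u_i v_i + 2 sum_j u'_j v'_j, let H be the subgroup of the v whose
   first t Z_4-coordinates lie in 2Z_4, and take as columns one element of each pair
   {v, -v} outside H; the codeword of u is (<u, v>)_v.
   If g is a nonzero additive map from a finite group P to Z_4, then the Lee weights
   of g sum to |P|: translating by a w with g w = 2 swaps g x and g x + 2, whose Lee
   weights add up to 2.  Summing over V and over H shows that twice the weight of
   u <> 0 is |V| or |V| - |H| according as u lies in H^perp or not; the same double
   count gives |H| |H^perp| = |V|, and H^perp has 2^t elements.
   A dual word of Lee weight at most 2 would make <u, c> a or <u, c +- c'> a vanish for
   all u, with a <> 0 (a unit in the second case) and distinct columns c, c'; this is
   ruled out by non-degeneracy, since c' <> +-c and H contains the 2-torsion of V. *)

From HB Require Import structures.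
From mathcomp Require Import all_boot all_order all_algebra zify.
Import GRing.Theory.
Set Implicit Arguments. Unset Strict Implicit. Unset Printing Implicit Defensive.
Local Open Scope ring_scope.

(* Products of finite Z-modules get their finZmodType structure. *)
HB.saturate prod.

Lemma leeZ4N (x : 'Z_4) : leeZ4 (- x) = leeZ4 x.
Proof. by case: x => [[|[|[|[|//]]]] ?]. Qed.

Lemma leeZ4_add2 (x : 'Z_4) : (leeZ4 (x + 2)%R + leeZ4 x)%N = 2%N.
Proof. by case: x => [[|[|[|[|//]]]] ?]. Qed.

Lemma leeZ4_eq0 (x : 'Z_4) : (leeZ4 x == 0%N) = (x == 0).
Proof. by case: x => [[|[|[|[|//]]]] ?]. Qed.

Lemma leeZ4_eq1 (x : 'Z_4) : (leeZ4 x == 1%N) = (x \is a GRing.unit).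
Proof. by case: x => [[|[|[|[|//]]]] ?]. Qed.

Lemma unitZ4E (x : 'Z_4) : (x \is a GRing.unit) = (x *+ 2 != 0).
Proof. by case: x => [[|[|[|[|//]]]] ?]. Qed.

Lemma Z4_eq2_or_double (x : 'Z_4) : x != 0 -> (x == 2) || (x *+ 2 == 2).
Proof. by case: x => [[|[|[|[|//]]]] ?]. Qed.

Lemma Z4_unit_eq_or_opp (a c : 'Z_4) :
  a \is a GRing.unit -> c \is a GRing.unit -> (c == a) || (c == - a).
Proof. by case: a => [[|[|[|[|//]]]] ?]; case: c => [[|[|[|[|//]]]] ?]. Qed.

Lemma Z4_mul2_eq0 (x : 'Z_4) : (x * 2 == 0) = (x == 0) || (x == 2).
Proof. by case: x => [[|[|[|[|//]]]] ?]. Qed.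

Lemma Z4_unit_mul_eq0 (a x : 'Z_4) : a \is a GRing.unit -> (a * x == 0) = (x == 0).
Proof. by move=> ua; rewrite mulrI_eq0 //; apply: mulrI. Qed.

Lemma lee_wt_eq0 n (v : 'rV['Z_4]_n) : (lee_wt v == 0%N) = (v == 0).
Proof.
rewrite /lee_wt sum_nat_eq0; apply/forallP/eqP => [v0|-> i]; last by rewrite mxE.
by apply/rowP => i; apply/eqP; rewrite mxE -leeZ4_eq0; exact: v0.
Qed.

Lemma lee_wt0 n : lee_wt (0 : 'rV['Z_4]_n) = 0%N.
Proof. by apply/eqP; rewrite lee_wt_eq0. Qed.

Lemma lee_wt_le2 n (y : 'rV['Z_4]_n) : y != 0 -> (lee_wt y <= 2)%N ->
  (exists j, forall i, i != j -> y ord0 i = 0) \/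
  (exists j k, [/\ j != k, y ord0 j \is a GRing.unit, y ord0 k \is a GRing.unit
                 & forall i, i != j -> i != k -> y ord0 i = 0]).
Proof.
rewrite -lee_wt_eq0 /lee_wt sum_nat_eq0 => /forallPn[j]; rewrite leeZ4_eq0 => yj.
case: (pickP [pred k | (k != j) && (y ord0 k != 0)]) => [k /andP[kj yk] | only_j].
  rewrite (bigD1 j) // (bigD1 k) //=.
  set rest := (X in (_ + (_ + X) <= _)%N) => le2.
  move: yj yk; rewrite -!leeZ4_eq0 -!lt0n => yj yk.
  right; exists j, k; split => [|||i ij ik]; first by rewrite eq_sym.
  - by rewrite -leeZ4_eq1; apply/eqP; lia.
  - by rewrite -leeZ4_eq1; apply/eqP; lia.
  have /eqP : rest = 0%N by lia.
  by rewrite sum_nat_eq0 => /forall_inP/(_ i); rewrite ij ik leeZ4_eq0 => /(_ isT)/eqP.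
move=> _; left; exists j => i ij; apply/eqP.
by move: (only_j i); rewrite /= ij => /negbFE.
Qed.

Lemma min_lee_dist_two_weights n (C : {set 'rV['Z_4]_n}) (w1 w2 : nat) :
  (0 < w1 <= w2)%N -> (0 < lee_A C w1)%N ->
  (forall c, c \in C -> c != 0 -> lee_wt c = w1 \/ lee_wt c = w2) ->
  min_lee_dist C w1.
Proof.
move=> /andP[w1_gt0 w12] /card_gt0P[c]; rewrite inE => /andP[cC /eqP cw] wts.
split; last by move=> d dC /(wts d dC) [] ->.
exists c => //; split=> //; rewrite -lee_wt_eq0 cw; lia.
Qed.

Lemma sum_leeZ4_additive (V : finZmodType) (P : {pred V}) (f : V -> 'Z_4) :
  zmod_closed P -> {morph f : x y / x + y} -> (exists2 v, v \in P & f v != 0) ->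
  (\sum_(v in P) leeZ4 (f v))%N = #|P|.
Proof.
move=> [P0 PB] fD [v Pv fv].
have PN x : x \in P -> - x \in P by move=> Px; rewrite -sub0r PB.
have PD x y : x \in P -> y \in P -> x + y \in P by move=> Px Py; rewrite -[y]opprK PB ?PN.
have [v2 Pv2 fv2] : exists2 v2, v2 \in P & f v2 = 2.
  by case/orP: (Z4_eq2_or_double fv) => /eqP fv2; [exists v | exists (v + v); rewrite ?fD ?PD].
have shift : (\sum_(x in P) leeZ4 (f x) = \sum_(x in P) leeZ4 (f x + 2)%R)%N.
  rewrite (reindex_inj (addIr v2)) /=; apply: eq_big => [x|x _]; last by rewrite fD fv2.
  by apply/idP/idP => [Pxv|Px]; [rewrite -(addrK v2 x) PB | rewrite PD].
suff : (\sum_(x in P) leeZ4 (f x)).*2 = #|P|.*2 by move/double_inj.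
rewrite -addnn {1}shift -big_split /= -mul2n mulnC -sum_nat_const.
by apply: eq_bigr => x _; rewrite leeZ4_add2.
Qed.

Section Pairing.
Variables (V : finZmodType) (form : V -> V -> 'Z_4).
Hypothesis formC : forall u v, form u v = form v u.
Hypothesis formDr : forall u, {morph form u : x y / x + y}.
Hypothesis form_nondeg : forall u, u != 0 -> exists v, form u v != 0.

Lemma form0r u : form u 0 = 0.
Proof. by apply: (addrI (form u 0)); rewrite -formDr !addr0. Qed.

Lemma formNr u v : form u (- v) = - form u v.
Proof. by apply: (addrI (form u v)); rewrite -formDr !subrr form0r. Qed.

Lemma formDl v : {morph form^~ v : x y / x + y}.
Proof. by move=> x y; rewrite !(formC _ v) formDr. Qed.

Lemma form0l v : form 0 v = 0.
Proof. by rewrite formC form0r. Qed.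

Lemma formNl u v : form (- u) v = - form u v.
Proof. by rewrite !(formC _ v) formNr. Qed.

Lemma formMnl u v n : form (u *+ n) v = form u v *+ n.
Proof. by elim: n => [|n IHn]; rewrite ?form0l // !mulrS formDl IHn. Qed.

Definition orth (H : {set V}) : {set V} := [set u | [forall v in H, form u v == 0]].

Lemma orth0 (H : {set V}) : 0 \in orth H.
Proof. by rewrite inE; apply/forall_inP => v _; rewrite form0l. Qed.

Lemma sum_leeZ4_form u : u != 0 -> (\sum_v leeZ4 (form u v))%N = #|V|.
Proof.
move=> /form_nondeg[v fv].
rewrite -cardsT -(@sum_leeZ4_additive V [set: V] (form u)) //.
- by apply: eq_bigl => x; rewrite inE.
- by split=> [|x y]; rewrite !inE.
- by exists v; rewrite ?inE.
Qed.

Lemma sum_leeZ4_form_subgroup (H : {set V}) u : zmod_closed H ->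
  (\sum_(v in H) leeZ4 (form u v))%N = if u \in orth H then 0%N else #|H|.
Proof.
move=> H_closed; rewrite inE; case: ifPn => [/forall_inP uH | /forall_inPn[v vH fv]].
  by rewrite big1 // => v /uH/eqP ->.
by apply: sum_leeZ4_additive => //; exists v.
Qed.

Lemma card_orth (H : {set V}) : zmod_closed H -> (#|H| * #|orth H|)%N = #|V|.
Proof.
(* Double counting of the Lee weights of the matrix (form u v), v in H. *)
move=> H_closed; have [H0 _] := H_closed.
have by_u : (\sum_u \sum_(v in H) leeZ4 (form u v))%N = (#|~: orth H| * #|H|)%N.
  under eq_bigr do rewrite sum_leeZ4_form_subgroup //.
  rewrite (bigID (mem (orth H))) /= big1 ?add0n => [|u ->] //.
  by rewrite -sum_nat_const; apply: eq_big => [u|u /negPf ->]; rewrite ?inE.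
have by_v : (\sum_u \sum_(v in H) leeZ4 (form u v))%N = ((#|H| - 1) * #|V|)%N.
  rewrite exchange_big (bigD1 0) //= big1 ?add0n => [|u _]; last by rewrite form0r.
  rewrite (cardsD1 0) H0 add1n subn1 /= -cardsE -sum_nat_const.
  apply: eq_big => [v|v /andP[_ v0]]; first by rewrite !inE andbC.
  by rewrite -(sum_leeZ4_form v0); apply: eq_bigr => u _; rewrite formC.
have := cardsC (orth H).
have : (0 < #|H|)%N by apply/card_gt0P; exists 0.
move: by_v; rewrite by_u.
move: #|H| #|orth H| #|~: orth H| #|V| => h a c n; nia.
Qed.

Section SignTransversal.
Variable H : {set V}.
Hypothesis H_closed : zmod_closed H.
Hypothesis H_2torsion : forall v, v *+ 2 = 0 -> v \in H.

Lemma opp_notin_subgroup v : (- v \in H) = (v \in H).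
Proof.
have [H0 HB] := H_closed.
by apply/idP/idP => Hv; [rewrite -[v]opprK |]; rewrite -sub0r HB.
Qed.

Lemma opp_neq_notin_subgroup v : v \notin H -> - v != v.
Proof.
apply: contraNneq => vN; apply: H_2torsion.
by rewrite mulr2n -{1}vN addNr.
Qed.

(* One element of each pair [v, -v] outside [H], chosen by enumeration rank. *)
Definition sign_transversal : {set V} :=
  [set v | (v \notin H) && (enum_rank v < enum_rank (- v))%N].

Local Notation R := sign_transversal.

Lemma sign_transversalP v : (v \in R) = (v \notin H) && (- v \notin R).
Proof.
rewrite !inE opprK opp_notin_subgroup; case: (boolP (v \in H)) => //= vH.
rewrite -leqNgt ltn_neqAle andb_idl // => _.
by rewrite val_eqE (can_eq enum_rankK) eq_sym opp_neq_notin_subgroup.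
Qed.

Lemma sum_compl_sign_transversal (F : V -> nat) : (forall v, F (- v) = F v) ->
  (\sum_(v in ~: H) F v = 2 * \sum_(v in R) F v)%N.
Proof.
move=> FN; rewrite (bigID (mem R)) mul2n -addnn /=; congr (_ + _).
  by apply: eq_bigl => v; rewrite inE sign_transversalP andbA andbb.
rewrite (reindex_inj oppr_inj) /=; apply: eq_big => [v|v _]; last exact: FN.
by rewrite inE opp_notin_subgroup -sign_transversalP.
Qed.

Lemma card_sign_transversal : (2 * #|R|)%N = (#|V| - #|H|)%N.
Proof.
rewrite -(cardsC H) addKn -!sum1_card.
by rewrite -sum_compl_sign_transversal //; apply: eq_bigl => v.
Qed.

Lemma exists_form_unit v : v \notin H -> exists u, form u v \is a GRing.unit.
Proof.
move=> vH; have v2 : v *+ 2 != 0 by apply: contraNneq vH; apply: H_2torsion.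
have [u fu] := form_nondeg v2; exists u.
by rewrite unitZ4E formC -formMnl.
Qed.

Variables (N : nat) (cardR : #|R| = N).

Definition column (j : 'I_N) : V := enum_val (cast_ord (esym cardR) j).

Lemma column_inj : injective column.
Proof. by move=> j k /enum_val_inj/cast_ord_inj. Qed.

Lemma column_in j : column j \in R.
Proof. exact: enum_valP. Qed.

Lemma sum_columns (F : V -> nat) : (\sum_(j < N) F (column j) = \sum_(v in R) F v)%N.
Proof.
rewrite [RHS]big_enum_val /column; case: N / cardR.
by apply: eq_bigr => j _; rewrite cast_ord_id.
Qed.

Lemma column_notin j : column j \notin H.
Proof. by move: (column_in j); rewrite sign_transversalP => /andP[]. Qed.

Lemma columnD_neq0 j k : column j + column k != 0.
Proof.
rewrite addr_eq0; apply: contraTneq (column_in j) => ->.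
by move: (column_in k); rewrite sign_transversalP => /andP[].
Qed.

Lemma columnB_neq0 j k : j != k -> column j - column k != 0.
Proof. by rewrite subr_eq0; apply: contra_neq => /column_inj. Qed.

Definition code_word (u : V) : 'rV['Z_4]_N := \row_j form u (column j).

Definition code : {set 'rV['Z_4]_N} := code_word @: setT.

Lemma code_wordD : {morph code_word : u v / u + v}.
Proof. by move=> u v; apply/rowP => j; rewrite !mxE formDl. Qed.

Lemma code_word0 : code_word 0 = 0.
Proof. by apply/rowP => j; rewrite !mxE form0l. Qed.

Lemma code_wordB u v : code_word (u - v) = code_word u - code_word v.
Proof. by apply/rowP => j; rewrite !mxE formDl formNl. Qed.

Lemma scale_code_word (a : 'Z_4) u : a *: code_word u = code_word (u *+ a).
Proof. by apply/rowP => j; rewrite !mxE formMnl -mulr_natl natr_Zp. Qed.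

Lemma lee_wt_code_word u : u != 0 ->
  (lee_wt (code_word u)).*2 = if u \in orth H then #|V| else (#|V| - #|H|)%N.
Proof.
move=> u_nz; have := sum_leeZ4_form u_nz.
rewrite (bigID (mem H)) /= sum_leeZ4_form_subgroup //.
have -> : (\sum_(v | v \notin H) leeZ4 (form u v) = (lee_wt (code_word u)).*2)%N.
  rewrite -mul2n /lee_wt; under [in RHS]eq_bigr do rewrite mxE.
  rewrite (sum_columns (fun v => leeZ4 (form u v))) -sum_compl_sign_transversal => [|v].
    by apply: eq_bigl => v; rewrite inE.
  by rewrite formNr leeZ4N.
by case: ifP => _ <-; rewrite ?add0n ?addKn.
Qed.

Lemma code_linear : z4_linear code.
Proof.
split; first by rewrite -code_word0 imset_f ?inE.
split=> [_ _ /imsetP[u _ ->] /imsetP[v _ ->] | a _ /imsetP[u _ ->]].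
  by rewrite -code_wordD imset_f ?inE.
by rewrite scale_code_word imset_f ?inE.
Qed.

Lemma code_projective : z4_projective code.
Proof.
move=> y; rewrite inE => /forall_inP y_dual y_nz; rewrite leqNgt ltnS; apply/negP.
have y_rel u : \sum_i form u (column i) * y ord0 i = 0.
  apply/eqP; have := y_dual _ (imset_f code_word (in_setT u)).
  by under eq_bigr do rewrite mxE.
case/(lee_wt_le2 y_nz) => [[j y_j] | [j [k [jk uj uk y_jk]]]].
  have yj_nz : y ord0 j != 0.
    apply: contraNneq y_nz => yj0; apply/eqP/rowP => i; rewrite mxE.
    by have [->|/y_j] := eqVneq i j.
  have [u fu] := exists_form_unit (column_notin j).
  move: (y_rel u); rewrite (bigD1 j) //= big1 ?addr0 => [|i /y_j ->]; last by rewrite mulr0.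
  by apply/eqP; rewrite Z4_unit_mul_eq0.
have [w w_nz w_rel] : exists2 w, w != 0 & forall u, form u w * y ord0 j = 0.
  have rel2 u : form u (column j) * y ord0 j + form u (column k) * y ord0 k = 0.
    rewrite -(y_rel u) (bigD1 j) //= (bigD1 k) 1?eq_sym //= big1 ?addr0 //.
    by move=> i /andP[ij ik]; rewrite y_jk ?mulr0.
  case/orP: (Z4_unit_eq_or_opp uj uk) => /eqP yk; rewrite yk in rel2.
    exists (column j + column k) => [|u]; first exact: columnD_neq0.
    by rewrite formDr mulrDl rel2.
  exists (column j - column k) => [|u]; first exact: columnB_neq0.
  by rewrite formDr formNr mulrDl mulNr -mulrN rel2.
have [u] := form_nondeg w_nz; rewrite formC => fu.
by move/eqP: (w_rel u); rewrite mulrC Z4_unit_mul_eq0 // (negPf fu).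
Qed.

Section TwoWeights.
Variables w1 w2 : nat.
Hypotheses (card_V : #|V| = w2.*2) (card_compl_H : (#|V| - #|H|)%N = w1.*2).
Hypothesis w1_gt0 : (0 < w1)%N.

Lemma w1_lt_w2 : (w1 < w2)%N.
Proof.
rewrite -ltn_double -card_V -card_compl_H ltn_subrL.
by apply/andP; split; apply/card_gt0P; exists 0; case: H_closed.
Qed.

Lemma lee_wt_code_word_two u : u != 0 ->
  lee_wt (code_word u) = if u \in orth H then w2 else w1.
Proof.
by move=> u_nz; apply: double_inj; rewrite lee_wt_code_word //; case: ifP.
Qed.

Lemma code_word_eq0 u : (code_word u == 0) = (u == 0).
Proof.
apply/idP/idP => [|/eqP ->]; last by rewrite code_word0.
apply: contraLR => /lee_wt_code_word_two wt; rewrite -lee_wt_eq0 wt -lt0n.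
by case: ifP => // _; rewrite (ltn_trans w1_gt0 w1_lt_w2).
Qed.

Lemma code_word_inj : injective code_word.
Proof.
by move=> u v uv; apply/eqP; rewrite -subr_eq0 -code_word_eq0 code_wordB uv subrr.
Qed.

Lemma code_two_weights c : c \in code -> c != 0 -> lee_wt c = w1 \/ lee_wt c = w2.
Proof.
case/imsetP=> u _ ->; rewrite code_word_eq0 => /lee_wt_code_word_two ->.
by case: ifP; [right | left].
Qed.

Lemma lee_A_code w : lee_A code w = #|[set u | lee_wt (code_word u) == w]|.
Proof.
rewrite /lee_A.
have -> : [set c in code | lee_wt c == w] = code_word @: [set u | lee_wt (code_word u) == w].
  apply/setP => c; rewrite inE; apply/andP/imsetP => [[/imsetP[u _ ->] cw] | [u]].
    by exists u; rewrite ?inE.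
  by rewrite inE => uw ->; rewrite imset_f ?inE.
exact: card_imset code_word_inj.
Qed.

Lemma lee_A_code_w1 : lee_A code w1 = (#|V| - #|orth H|)%N.
Proof.
rewrite lee_A_code; have -> : [set u | lee_wt (code_word u) == w1] = ~: orth H.
  apply/setP => u; rewrite in_setC [LHS]inE.
  have [->|/lee_wt_code_word_two ->] := eqVneq u 0.
    by rewrite code_word0 lee_wt0 orth0 eq_sym gtn_eqF.
  by case: ifP; rewrite ?eqxx // gtn_eqF ?w1_lt_w2.
by rewrite cardsCs setCK.
Qed.

Lemma lee_A_code_w2 : lee_A code w2 = (#|orth H| - 1)%N.
Proof.
rewrite lee_A_code; have -> : [set u | lee_wt (code_word u) == w2] = orth H :\ 0.
  apply/setP => u; rewrite in_setD1 [LHS]inE.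
  have [->|/lee_wt_code_word_two ->] := eqVneq u 0.
    by rewrite code_word0 lee_wt0 eq_sym gtn_eqF // (ltn_trans w1_gt0 w1_lt_w2).
  by case: ifP; rewrite ?eqxx // ltn_eqF ?w1_lt_w2.
by rewrite [in RHS](cardsD1 0) orth0 add1n subn1.
Qed.

Lemma code_two_weight : (#|orth H| < #|V|)%N ->
  [/\ injective code_word, min_lee_dist code w1,
      forall c, c \in code -> c != 0 -> lee_wt c = w1 \/ lee_wt c = w2,
      lee_A code w1 = (#|V| - #|orth H|)%N & lee_A code w2 = (#|orth H| - 1)%N].
Proof.
move=> T_lt_V; split; [exact: code_word_inj | | exact: code_two_weights |
                       exact: lee_A_code_w1 | exact: lee_A_code_w2].
apply: min_lee_dist_two_weights code_two_weights.
  by rewrite w1_gt0 ltnW // w1_lt_w2.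
by rewrite lee_A_code_w1 subn_gt0.
Qed.

End TwoWeights.

End SignTransversal.

End Pairing.

Lemma row_neq0 (R : nmodType) n (r : 'rV[R]_n) : r != 0 -> exists i, r ord0 i != 0.
Proof.
move=> r_nz; apply/existsP; apply: contraNT r_nz => /existsPn r0.
by apply/eqP/rowP => i; rewrite mxE; apply/eqP/negbNE/r0.
Qed.

Section Z4Z2.
Variables k1 k2 : nat.
Local Notation V := ('rV['Z_4]_k1 * 'rV['Z_2]_k2)%type.

Lemma card_Z4Z2 : #|{: V}| = (2 ^ (2 * k1 + k2))%N.
Proof. by rewrite card_prod !card_mx !card_ord !mul1n expnD expnM. Qed.

Definition Z2_to_Z4 (x : 'Z_2) : 'Z_4 := if x == 0 then 0 else 2.

Lemma Z2_to_Z4D : {morph Z2_to_Z4 : x y / x + y}.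
Proof. by case=> [[|[|//]] ?] [[|[|//]] ?]; apply/eqP. Qed.

Lemma Z2_to_Z4_eq0 x : (Z2_to_Z4 x == 0) = (x == 0).
Proof. by case: x => [[|[|//]] ?]. Qed.

Definition z4z2_form (u v : V) : 'Z_4 :=
  \sum_(i < k1) u.1 ord0 i * v.1 ord0 i + \sum_(j < k2) Z2_to_Z4 (u.2 ord0 j * v.2 ord0 j).

Lemma z4z2_formC u v : z4z2_form u v = z4z2_form v u.
Proof. by rewrite /z4z2_form; congr (_ + _); apply: eq_bigr => i _; rewrite mulrC. Qed.

Lemma z4z2_formDr u : {morph z4z2_form u : x y / x + y}.
Proof.
move=> x y; rewrite /z4z2_form addrACA -!big_split /=.
by congr (_ + _); apply: eq_bigr => i _; rewrite !mxE ?mulrDr ?Z2_to_Z4D.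
Qed.

Definition e4 (i : 'I_k1) (a : 'Z_4) : V := (a *: delta_mx 0 i, 0).
Definition e2 (j : 'I_k2) : V := (0, delta_mx 0 j).

Lemma z4z2_form_e4 u i a : z4z2_form u (e4 i a) = u.1 ord0 i * a.
Proof.
rewrite /z4z2_form (bigD1 i) //= big1 => [|l /negPf li].
  by rewrite big1 => [|j _]; rewrite !mxE ?eqxx ?mulr1 ?mulr0 ?addr0.
by rewrite !mxE li andbF mulr0n !mulr0.
Qed.

Lemma z4z2_form_e2 u j : z4z2_form u (e2 j) = Z2_to_Z4 (u.2 ord0 j).
Proof.
rewrite /z4z2_form big1 => [|i _]; last by rewrite mxE mulr0.
rewrite (bigD1 j) //= big1 => [|l /negPf lj]; last by rewrite !mxE lj andbF mulr0n mulr0.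
by rewrite !mxE !eqxx mulr1 add0r addr0.
Qed.

Lemma z4z2_form_nondeg u : u != 0 -> exists v, z4z2_form u v != 0.
Proof.
case: u => u1 u2 u_nz; have [u1_0|/row_neq0[i ui]] := eqVneq u1 0.
  have /row_neq0[j uj] : u2 != 0 by apply: contraNneq u_nz => u2_0; rewrite u1_0 u2_0.
  by exists (e2 j); rewrite z4z2_form_e2 Z2_to_Z4_eq0.
by exists (e4 i 1); rewrite z4z2_form_e4 mulr1.
Qed.

Variable t : nat.
Hypothesis t_le_k1 : (t <= k1)%N.

Definition even_prefix : {set V} :=
  [set v : V | [forall (i : 'I_k1 | (i < t)%N), v.1 ord0 i *+ 2 == 0]].

Lemma even_prefix_closed : zmod_closed even_prefix.
Proof.
split; first by rewrite inE; apply/forall_inP => i _; rewrite mxE mul0rn.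
move=> x y; rewrite !inE => /forall_inP x2 /forall_inP y2; apply/forall_inP => i it.
by rewrite /= !mxE mulrnBl (eqP (x2 i it)) (eqP (y2 i it)) subrr.
Qed.

Lemma even_prefix_2torsion v : v *+ 2 = 0 -> v \in even_prefix.
Proof.
move=> v2; rewrite inE; apply/forall_inP => i _; apply/eqP.
by move/(congr1 (fun w : V => w.1 ord0 i)): v2; rewrite /= !mxE.
Qed.

Lemma e4_in_even_prefix (i : 'I_k1) (a : 'Z_4) :
  (t <= i)%N || (a *+ 2 == 0) -> e4 i a \in even_prefix.
Proof.
move=> ia; rewrite inE; apply/forall_inP => l lt; rewrite !mxE -mulrnAl.
case: (eqVneq l i) => [li | _]; last by rewrite andbF mulr0.
by move: ia; rewrite -li leqNgt lt => /eqP->; rewrite mul0r.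
Qed.

Lemma e2_in_even_prefix j : e2 j \in even_prefix.
Proof. by rewrite inE; apply/forall_inP => i _; rewrite mxE mul0rn. Qed.

Lemma widen_ord_inj : injective (widen_ord t_le_k1).
Proof. by move=> a b /(congr1 val) /= /val_inj. Qed.

Definition prefix_word (A : {set 'I_t}) : V :=
  (\row_i (if i \in widen_ord t_le_k1 @: A then 2 else 0), 0).

Lemma prefix_word_inj : injective prefix_word.
Proof.
move=> A B /(congr1 (fun v : V => v.1)) /rowP AB; apply/setP => j.
move: (AB (widen_ord t_le_k1 j)); rewrite !mxE !mem_imset; try exact: widen_ord_inj.
by case: (j \in A); case: (j \in B).
Qed.

Lemma prefix_word_in_orth A : prefix_word A \in orth z4z2_form even_prefix.
Proof.
rewrite inE; apply/forall_inP => v; rewrite inE => /forall_inP v2.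
rewrite /z4z2_form big1 => [|i _]; last first.
  rewrite mxE; case: imsetP => [[j _ ->] | _]; last by rewrite mul0r.
  by rewrite mulrC mulr_natr; apply/eqP/v2; rewrite /= ltn_ord.
by rewrite big1 // => j _; rewrite mxE mul0r.
Qed.

Lemma orth_even_prefix u : u \in orth z4z2_form even_prefix ->
  u = prefix_word [set j | u.1 ord0 (widen_ord t_le_k1 j) != 0].
Proof.
rewrite inE => /forall_inP u_orth; case: u u_orth => u1 u2 u_orth.
have u2_0 : u2 = 0.
  apply/rowP => j; apply/eqP; rewrite mxE -Z2_to_Z4_eq0 -(z4z2_form_e2 (u1, u2)).
  exact: u_orth (e2_in_even_prefix j).
have u1_suffix (i : 'I_k1) : (t <= i)%N -> u1 ord0 i = 0.
  move=> ti; apply/eqP; rewrite -[u1 ord0 i]mulr1 -(z4z2_form_e4 (u1, u2)).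
  by apply: u_orth; rewrite e4_in_even_prefix ?ti.
have u1_prefix (i : 'I_k1) : (u1 ord0 i == 0) || (u1 ord0 i == 2).
  rewrite -Z4_mul2_eq0 -(z4z2_form_e4 (u1, u2)).
  by apply: u_orth; rewrite e4_in_even_prefix ?orbT.
(* [rowP] indexes the row by [0], the facts above by [ord0]. *)
rewrite /prefix_word u2_0; congr (_, _); apply/rowP => i; rewrite mxE -[u1 0 i]/(u1 ord0 i).
have [it|ti] := ltnP i t; last first.
  rewrite u1_suffix //; case: imsetP => // [[j _ ij]].
  by move: ti; rewrite ij leqNgt /= ltn_ord.
have -> : i = widen_ord t_le_k1 (Ordinal it) by apply: val_inj.
rewrite mem_imset ?inE /=; last exact: widen_ord_inj.
by case/orP: (u1_prefix (widen_ord t_le_k1 (Ordinal it))) => /eqP ->.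
Qed.

Lemma card_orth_even_prefix : #|orth z4z2_form even_prefix| = (2 ^ t)%N.
Proof.
have -> : orth z4z2_form even_prefix = prefix_word @: setT.
  apply/setP => u; apply/idP/imsetP => [/orth_even_prefix -> | [A _ ->]].
    by eexists; rewrite ?inE.
  exact: prefix_word_in_orth.
by rewrite (card_imset _ prefix_word_inj) -powersetT card_powerset cardsT card_ord.
Qed.

Lemma card_even_prefix : #|even_prefix| = (2 ^ (2 * k1 + k2 - t))%N.
Proof.
have := card_orth z4z2_formC z4z2_formDr (@z4z2_form_nondeg) even_prefix_closed.
rewrite card_orth_even_prefix card_Z4Z2 => card_HT; apply/eqP.
by rewrite -(eqn_pmul2r (expn_gt0 2 t)) card_HT -expnD subnK //; lia.
Qed.

End Z4Z2.

Lemma pow2_two_weights m t : (0 < t < m)%N ->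
  [/\ (2 ^ m = (2 ^ (m - 1)).*2)%N,
      (2 ^ m - 2 ^ (m - t) = (2 ^ (m - 1) - 2 ^ (m - t - 1)).*2)%N,
      (0 < 2 ^ (m - 1) - 2 ^ (m - t - 1))%N & (2 ^ t < 2 ^ m)%N].
Proof.
case/andP=> t_gt0 t_lt_m.
have [s ->] : exists s, m = ((s + t).+1)%N by exists (m - t - 1)%N; lia.
have -> : ((s + t).+1 - 1 = s + t)%N by lia.
have -> : ((s + t).+1 - t - 1 = s)%N by lia.
have -> : ((s + t).+1 - t = s.+1)%N by lia.
rewrite ltn_exp2l ?ltnS ?leq_addl // doubleB -!mul2n -!expnS subn_gt0.
by rewrite ltn_exp2l //; split=> //; lia.
Qed.

Theorem theorem5p7 (k1 k2 : nat) (hk : (2 <= 2 * k1 + k2)%N)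
  (t : nat) (ht1 : (1 <= t)%N) (ht2 : (t <= k1)%N) :
  exists C : {set 'rV['Z_4]_(2 ^ (2 * k1 + k2 - 1) - 2 ^ (2 * k1 + k2 - t - 1))},
    [/\ z4_linear C, z4_projective C, z4_type C k1 k2 &
      [/\         min_lee_dist C (2 ^ (2 * k1 + k2 - 1) - 2 ^ (2 * k1 + k2 - t - 1)),
        (forall c, c \in C -> c != 0 ->
           lee_wt c = (2 ^ (2 * k1 + k2 - 1) - 2 ^ (2 * k1 + k2 - t - 1))%N \/
           lee_wt c = (2 ^ (2 * k1 + k2 - 1))%N),
        lee_A C (2 ^ (2 * k1 + k2 - 1) - 2 ^ (2 * k1 + k2 - t - 1))
          = (2 ^ (2 * k1 + k2) - 2 ^ t)%N
      & lee_A C (2 ^ (2 * k1 + k2 - 1)) = (2 ^ t - 1)%N]].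
Proof.
set m := (2 * k1 + k2)%N; set w1 := (2 ^ (m - 1) - 2 ^ (m - t - 1))%N.
have t_bounds : (0 < t < m)%N by lia.
have [card_V card_compl_H w1_gt0 card_T_lt] := pow2_two_weights t_bounds.
have fC := @z4z2_formC k1 k2; have fD := @z4z2_formDr k1 k2; have fN := @z4z2_form_nondeg k1 k2.
have HC := even_prefix_closed k1 k2 t; have H2 := @even_prefix_2torsion k1 k2 t.
rewrite -card_Z4Z2 -(card_even_prefix k2 ht2) in card_V card_compl_H.
have cardR : #|sign_transversal (even_prefix k1 k2 t)| = w1.
  by apply: double_inj; rewrite -card_compl_H -card_sign_transversal // mul2n.
rewrite -(card_orth_even_prefix k2 ht2) -card_Z4Z2 in card_T_lt *.
have [code_inj dist wts A1 A2] :=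
  code_two_weight fC fD fN HC H2 cardR card_V card_compl_H w1_gt0 card_T_lt.
exists (code (@z4z2_form k1 k2) cardR); split=> //; [exact: code_linear | exact: code_projective |].
exists (code_word (@z4z2_form k1 k2) cardR); split=> //; first exact: code_wordD.
by move=> c; split=> [/imsetP[u _ ->] | [u ->]]; [exists u | rewrite imset_f ?inE].
Qed.
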